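(* Let $\Lambda$ be a finite-dimensional local algebra over an algebraically closed field $k$ and let $M$ be an indecomposable finitely generated $\Lambda$-module with $\mathrm{End}_\Lambda(M)$ symmetric. Then $M\simeq\Lambda/I$ for some left ideal $I$ of $\Lambda$ such that, with $\Gamma=\{x\in\Lambda: Ix\subseteq I\}$, the algebra $\Gamma/I$ is symmetric.
   Context: Symmetric: the algebra is isomorphic to its $k$-dual as a bimodule. Note $I$ is a two-sided ideal of the subalgebra $\Gamma$. *)

From HB Require Import structures.
From mathcomp Require Import all_boot all_algebra all_field.
Set Implicit Arguments. Unset Strict Implicit. Unset Printing Implicit Defensive.
Import GRing.Theory.
Local Open Scope ring_scope.

(* The algebra in question is a quotient G/I, where V is a K-vector space     *)
(* carrying a multiplication [mul], G is a subalgebra (subset of V closed     *)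
(* under the operations) and I is a two-sided ideal of G.  G/I is symmetric   *)
(* iff G/I is isomorphic to its K-dual (G/I)^* as a G/I-bimodule, where the   *)
(* bimodule structure on the dual is  (a . phi . b)(y) = phi (b y a).         *)
(* We write out literally such a bimodule isomorphism F : G/I -> (G/I)^*,     *)
(* represented by its lift  f : V -> V -> K,  f x = F (x + I) (a functional   *)
(* on G vanishing on I, extended arbitrarily to V).                           *)
Definition symmetric_quot (K : fieldType) (V : lmodType K)
    (mul : V -> V -> V) (G I : V -> Prop) : Prop :=
  exists f : V -> V -> K,
      (forall c x1 x2 y, f (c *: x1 + x2) y = c * f x1 y + f x2 y) /\
      (forall c x y1 y2, f x (c *: y1 + y2) = c * f x y1 + f x y2) /\
      (* F is well defined on G/I and F x is a functional on G/I *)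
      (forall x y, I x -> G y -> f x y = 0) /\
      (forall x y, G x -> I y -> f x y = 0) /\
      (* F is a morphism of G/I-bimodules *)
      (forall a b x y, G a -> G b -> G x -> G y ->
         f (mul (mul a x) b) y = f x (mul (mul b y) a)) /\
      (forall x, G x -> (forall y, G y -> f x y = 0) -> I x) /\
      (forall g : V -> K,
         (forall c y1 y2, g (c *: y1 + y2) = c * g y1 + g y2) ->
         (forall y, I y -> g y = 0) ->
         exists2 x, G x & forall y, G y -> f x y = g y).

Definition left_ideal (K : fieldType) (A : falgType K) (L : {vspace A}) :=
  (fullv * L <= L)%VS.

Definition maximal_left_ideal (K : fieldType) (A : falgType K)
    (L : {vspace A}) : Prop :=
  [/\ left_ideal L, L != fullv &
      forall L' : {vspace A}, left_ideal L' -> (L <= L')%VS ->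
        L' = L \/ L' = fullv].

Definition local_algebra (K : fieldType) (A : falgType K) : Prop :=
  exists L : {vspace A}, maximal_left_ideal L /\
    forall L' : {vspace A}, maximal_left_ideal L' -> L' = L.

(* Finitely generated left A-modules.  Since A is finite-dimensional, these  *)
(* are the finite-dimensional ones; a module of K-dimension n is given by a   *)
(* unital K-algebra morphism rho : A -> 'M[K]_n acting on column vectors:     *)
(* a . v = rho a *m v.                                                        *)
Definition is_rep (K : fieldType) (A : falgType K) (n : nat)
    (rho : A -> 'M[K]_n) : Prop :=
  [/\ (forall c a b, rho (c *: a + b) = c *: rho a + rho b),
      rho 1 = 1%:M &
      (forall a b, rho (a * b) = rho a *m rho b)].

Definition submodule (K : fieldType) (A : falgType K) (n : nat)
    (rho : A -> 'M[K]_n) (U : {vspace 'cV[K]_n}) : Prop :=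
  forall a v, v \in U -> rho a *m v \in U.

Definition indecomposable (K : fieldType) (A : falgType K) (n : nat)
    (rho : A -> 'M[K]_n) : Prop :=
  (0 < n)%N /\
  forall U W : {vspace 'cV[K]_n}, submodule rho U -> submodule rho W ->
    (U :&: W)%VS = 0%VS -> (U + W)%VS = fullv -> U = 0%VS \/ W = 0%VS.

Definition End_mod (K : fieldType) (A : falgType K) (n : nat)
    (rho : A -> 'M[K]_n) (f : 'M[K]_n) : Prop :=
  forall a, f *m rho a = rho a *m f.

Definition iso_quot (K : fieldType) (A : falgType K) (n : nat)
    (rho : A -> 'M[K]_n) (I : {vspace A}) : Prop :=
  exists phi : A -> 'cV[K]_n,
  [/\ (forall c x y, phi (c *: x + y) = c *: phi x + phi y),
      (forall a x, phi (a * x) = rho a *m phi x),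
      (forall x, phi x = 0 <-> x \in I) &
      (forall v, exists x, phi x = v)].

Definition Gamma_of (K : fieldType) (A : falgType K) (I : {vspace A})
    (x : A) : Prop :=
  (I * <[x]> <= I)%VS.

From HB Require Import structures.
From mathcomp Require Import all_boot all_algebra all_field zify.
From Stdlib Require Import Classical.
Set Implicit Arguments. Unset Strict Implicit. Unset Printing Implicit Defensive.
Import GRing.Theory.
Local Open Scope ring_scope.

(* Let L be the radical of Lambda, so Lambda = k 1 + L. By Fitting's lemma
   End(M) is local, hence (k being algebraically closed) End(M) has a common
   eigenvector c0 among the vectors killed by L. For a linear form phi vanishing
   on L M, the rank-one map v |-> phi(v) c0 is an endomorphism h_phi, and for a
   symmetrizing form f of End(M) the scalar f(h_phi, 1) vanishes only if
   h_phi = 0, because f(h_phi, Y) = f(Y h_phi, 1) and Y h_phi is a multiple of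
   h_phi. So any two linear forms vanishing on L M are proportional: M has a
   unique maximal submodule and is cyclic, M = Lambda m. Then M ~ Lambda/I for
   I = ann(m), and right multiplication (b m |-> b x m) is an anti-isomorphism
   Gamma/I ~ End(M), along which f transfers. *)

Lemma ex_min_measure (T : Type) (P : T -> Prop) (mu : T -> nat) x0 :
  P x0 -> exists2 x, P x & forall y, P y -> (mu x <= mu y)%N.
Proof.
suff min_below N x : (mu x < N)%N -> P x ->
    exists2 x, P x & forall y, P y -> (mu x <= mu y)%N by exact: min_below.
elim: N x => // N IH x; rewrite ltnS => le_xN Px.
have [[y Py lt_yx] | no_lt] := classic (exists2 y, P y & (mu y < mu x)%N).
  exact: IH (leq_trans lt_yx le_xN) Py.
exists x => // y Py; rewrite leqNgt; apply/negP => lt_yx.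
by apply: no_lt; exists y.
Qed.

Section ExtremalSubspaces.

Variables (K : fieldType) (vT : vectType K) (P : {vspace vT} -> Prop).

Lemma ex_minimal_vspace X0 : P X0 ->
  exists X, [/\ P X, (X <= X0)%VS & forall Y, P Y -> (Y <= X)%VS -> Y = X].
Proof.
move=> PX0; have [X [PX sXX0] minX] := @ex_min_measure _
  (fun X => P X /\ (X <= X0)%VS) (fun X => \dim X) _ (conj PX0 (subvv X0)).
exists X; split=> // Y PY sYX; apply/eqP; rewrite eqEdim sYX.
exact: minX (conj PY (subv_trans sYX sXX0)).
Qed.

Lemma ex_maximal_vspace X0 : P X0 ->
  exists X, [/\ P X, (X0 <= X)%VS & forall Y, P Y -> (X <= Y)%VS -> Y = X].
Proof.
move=> PX0; have [X [PX sX0X] maxX] := @ex_min_measure _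
  (fun X => P X /\ (X0 <= X)%VS) (fun X => \dim {:vT} - \dim X)%N _
  (conj PX0 (subvv X0)).
exists X; split=> // Y PY sXY; apply/eqP; rewrite eq_sym eqEdim sXY /=.
have := maxX Y (conj PY (subv_trans sX0X sXY)).
have := dimvS (subvf Y); lia.
Qed.

End ExtremalSubspaces.

Lemma ex_vspace_of (K : fieldType) (vT : vectType K) (p : vT -> Prop) :
  p 0 -> (forall c x y, p x -> p y -> p (c *: x + y)) ->
  exists V : {vspace vT}, forall v, v \in V <-> p v.
Proof.
move=> p0 p_lin.
have sub0 (v : vT) : v \in (0%VS : {vspace vT}) -> p v by rewrite memv0 => /eqP ->.
have [V [sVp _ maxV]] :=
  @ex_maximal_vspace _ _ (fun X => forall v, v \in X -> p v) _ sub0.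
exists V => v; split=> [|pv]; first exact: sVp.
suff <- : (V + <[v]>)%VS = V by apply: subvP (addvSr V _) _ (memv_line v).
apply: maxV (addvSl _ _) => u /memv_addP [x xV [w /vlineP [c ->] ->]].
by rewrite addrC; apply: p_lin => //; apply: sVp.
Qed.

Lemma ex_linear_form_notin (K : fieldType) (vT : vectType K)
    (U : {vspace vT}) v : v \notin U ->
  exists phi : vT -> K, [/\ forall c x y, phi (c *: x + y) = c * phi x + phi y,
    forall u, u \in U -> phi u = 0 & phi v = 1].
Proof.
move=> vNU; set e := vbasis {:vT}; set w := v - projv U v.
have [i wi_neq0] : exists i, coord e i w != 0.
  apply: NNPP => no_i; move: vNU; rewrite -[v](subrK (projv U v)) -/w.
  suff -> : w = 0 by rewrite add0r memv_proj.
  rewrite (coord_vbasis (memvf w)) big1 // => i _.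
  by case: (eqVneq (coord e i w) 0) => [-> | ?]; [rewrite scale0r | case: no_i; exists i].
exists (fun x => coord e i (x - projv U x) / coord e i w); split.
- by move=> c x y; rewrite linearP /= opprD addrACA -scalerBr !linearP /= mulrDl mulrA.
- by move=> u uU; rewrite projv_id // subrr linear0 mul0r.
- by rewrite divff.
Qed.

Lemma linfunE (K : fieldType) (aT rT : vectType K) (f : aT -> rT) :
  (forall c x y, f (c *: x + y) = c *: f x + f y) -> linfun f =1 f.
Proof.
move=> f_lin; exact: (lfunE (HB.pack f (GRing.isLinear.Build K _ _ *:%R f f_lin))).
Qed.

Section ColumnVectors.

Variables (K : fieldType) (n : nat).
Implicit Types (A B : 'M[K]_n) (v : 'cV[K]_n).

Lemma matrix_cVP A B : (forall v, A *m v = B *m v) -> A = B.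
Proof.
move=> eqAB; apply/matrixP => i j.
by have := congr1 (fun u : 'cV_n => u i 0) (eqAB (delta_mx j 0)); rewrite -!colE !mxE.
Qed.

Lemma unitmx_cVP A : A \in unitmx <-> (forall v, A *m v = 0 -> v = 0).
Proof.
split=> [uA v Av0 | Ainj]; first by rewrite -(mul1mx v) -(mulVmx uA) -mulmxA Av0 mulmx0.
rewrite -unitmx_tr -row_free_unit; apply: inj_row_free => r.
move=> /(congr1 trmx); rewrite trmx_mul trmxK trmx0 => /Ainj /(congr1 trmx).
by rewrite trmxK trmx0.
Qed.

Lemma fullv_cV_neq0 : (0 < n)%N -> (fullv : {vspace 'cV[K]_n}) != 0%VS.
Proof. by move=> n_gt0; rewrite -dimv_eq0 dimvf dim_matrix; lia. Qed.

Definition lin1_cmx (F : 'cV[K]_n -> 'cV[K]_n) : 'M[K]_n :=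
  \matrix_(i, j) F (delta_mx j 0) i 0.

Lemma mul_lin1_cmx (F : 'cV[K]_n -> 'cV[K]_n) :
  (forall c x y, F (c *: x + y) = c *: F x + F y) -> forall v, lin1_cmx F *m v = F v.
Proof.
move=> F_lin v; pose G : {linear 'cV[K]_n -> 'cV[K]_n} :=
  HB.pack F (GRing.isLinear.Build K _ _ *:%R F F_lin).
apply/matrixP => i j; rewrite (ord1 j) {2}[v]matrix_sum_delta.
rewrite -[F _]/(G _) linear_sum summxE mxE; apply: eq_bigr => l _.
by rewrite big_ord1 linearZ mxE /lin1_cmx mxE mulrC.
Qed.

End ColumnVectors.

Lemma ex_eigenvalue (k : closedFieldType) n (A : 'M[k]_n) : (0 < n)%N ->
  exists lam, A - lam%:M \notin unitmx.
Proof.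
case: n A => [//|n] A _.
have /closed_rootP [lam] : size (char_poly A) != 1 by rewrite size_char_poly.
rewrite -eigenvalue_root_char => /eigenvalueP [v vA v_neq0]; exists lam.
apply: contra v_neq0 => uA; apply/eqP.
have vAlam : v *m (A - lam%:M) = 0 by rewrite mulmxBr vA mul_mx_scalar subrr.
by rewrite -(mulmx1 v) -(mulmxV uA) mulmxA vAlam mul0mx.
Qed.

Lemma left_idealP (K : fieldType) (A : falgType K) (X : {vspace A}) :
  left_ideal X <-> forall a u, u \in X -> a * u \in X.
Proof.
split=> [/prodvP X_ideal a u uX | X_ideal]; first exact: X_ideal (memvf a) uX.
by apply/prodvP => a u _; apply: X_ideal.
Qed.

Section LocalAlgebra.

Variables (K : fieldType) (A : falgType K) (L : {vspace A}).
Hypotheses (L_max : maximal_left_ideal L)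
  (L_unique : forall L', maximal_left_ideal L' -> L' = L).

Lemma proper_left_ideal_sub X : left_ideal X -> X != fullv -> (X <= L)%VS.
Proof.
move=> X_ideal X_proper.
have [Y [[Y_ideal Y_proper] sXY maxY]] := @ex_maximal_vspace _ _
  (fun Y => left_ideal Y /\ Y != fullv) _ (conj X_ideal X_proper).
suff -> : L = Y by [].
apply: esym; apply: L_unique; split=> // Z Z_ideal sYZ.
by have [-> | Z_proper] := eqVneq Z fullv; [right | left; apply: maxY].
Qed.

Lemma one_notin_max : 1 \notin L.
Proof.
case: L_max => /left_idealP L_ideal L_proper _; apply: contra L_proper => L1.
by rewrite eqEsubv subvf; apply/subvP => a _; rewrite -(mulr1 a) L_ideal.
Qed.

Lemma notin_max_left_unit u : u \notin L -> exists y, y * u = 1.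
Proof.
move=> uNL; set X := (fullv * <[u]>)%VS.
have X_ideal : left_ideal X by rewrite /left_ideal prodvA prodvSl ?subvf.
have [X_full | X_proper] := eqVneq X fullv.
  have /memv_cosetP [y _ yu1] : (1 : A) \in X by rewrite X_full memvf.
  by exists y.
have /(subvP (proper_left_ideal_sub X_ideal X_proper)) : u \in X.
  by apply/memv_cosetP; exists 1; rewrite ?memvf ?mul1r.
by rewrite (negbTE uNL).
Qed.

End LocalAlgebra.

Section EndomorphismAlgebra.

Variables (K : fieldType) (A : falgType K) (n : nat) (rho : A -> 'M[K]_n).

Lemma End_mod_scalar c : End_mod rho c%:M.
Proof. by move=> a; rewrite mul_scalar_mx mul_mx_scalar. Qed.

Lemma End_mod_lin c y z :
  End_mod rho y -> End_mod rho z -> End_mod rho (c *: y + z).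
Proof. by move=> Ey Ez a; rewrite mulmxDl mulmxDr -scalemxAl -scalemxAr Ey Ez. Qed.

Lemma End_modZ c y : End_mod rho y -> End_mod rho (c *: y).
Proof. by move=> Ey a; rewrite -scalemxAl -scalemxAr Ey. Qed.

Lemma End_modB y z : End_mod rho y -> End_mod rho z -> End_mod rho (y - z).
Proof. by move=> Ey Ez; rewrite addrC -scaleN1r; apply: End_mod_lin. Qed.

Lemma End_modM y z : End_mod rho y -> End_mod rho z -> End_mod rho (y *m z).
Proof. by move=> Ey Ez a; rewrite -mulmxA Ez !mulmxA Ey. Qed.

Lemma End_modV y : End_mod rho y -> y \in unitmx -> End_mod rho (invmx y).
Proof.
move=> Ey uy a; rewrite -[LHS]mulmx1 -(mulmxV uy) !mulmxA.
by rewrite -[invmx y *m rho a *m y]mulmxA -Ey mulmxA mulVmx // mul1mx.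
Qed.

Lemma submodule0 : submodule rho 0%VS.
Proof. by move=> a v; rewrite !memv0 => /eqP ->; rewrite mulmx0. Qed.

Lemma submodule_full : submodule rho fullv.
Proof. by move=> a v _; apply: memvf. Qed.

End EndomorphismAlgebra.

Section Representation.

Variables (K : fieldType) (A : falgType K) (n : nat) (rho : A -> 'M[K]_n).
Hypothesis rho_rep : is_rep rho.

Lemma rep_lin c a b : rho (c *: a + b) = c *: rho a + rho b.
Proof. by case: rho_rep. Qed.

Let rho_linear : {linear A -> 'M[K]_n} :=
  HB.pack rho (GRing.isLinear.Build K _ _ *:%R rho rep_lin).

Lemma rep1 : rho 1 = 1%:M. Proof. by case: rho_rep. Qed.
Lemma repM a b : rho (a * b) = rho a *m rho b. Proof. by case: rho_rep. Qed.
Lemma rep0 : rho 0 = 0. Proof. exact: (linear0 rho_linear). Qed.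
Lemma repB a b : rho (a - b) = rho a - rho b. Proof. exact: (linearB rho_linear). Qed.
Lemma rep_scalar c : rho c%:A = c%:M.
Proof. by rewrite -[c%:A]addr0 rep_lin rep0 addr0 rep1 scalemx1. Qed.

Definition rep_act (v : 'cV[K]_n) : 'Hom(A, 'cV[K]_n) := linfun (fun x => rho x *m v).

Lemma rep_actE v x : rep_act v x = rho x *m v.
Proof. by apply: linfunE => c a b; rewrite rep_lin mulmxDl scalemxAl. Qed.

End Representation.

Section LocalRepresentation.

Variables (K : fieldType) (A : falgType K) (L : {vspace A}).
Variables (n : nat) (rho : A -> 'M[K]_n).
Hypotheses (L_max : maximal_left_ideal L)
  (L_unique : forall L', maximal_left_ideal L' -> L' = L) (rho_rep : is_rep rho).

Lemma max_ideal_kills_simple_factor (Z Y : {vspace 'cV[K]_n}) :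
  submodule rho Z -> submodule rho Y -> (Z <= Y)%VS ->
  (forall W, submodule rho W -> (Z <= W)%VS -> (W <= Y)%VS -> W = Z \/ W = Y) ->
  forall l v, l \in L -> v \in Y -> rho l *m v \in Z.
Proof.
move=> Z_sub Y_sub sZY Y_simple l v lL vY.
have [vZ | vNZ] := boolP (v \in Z); first exact: Z_sub.
have [/left_idealP L_ideal _ _] := L_max.
pose W := (Z + rep_act rho v @: L)%VS.
have W_sub : submodule rho W.
  move=> a u /memv_addP [z zZ [w /memv_imgP [l' l'L ->] ->]].
  rewrite mulmxDr rep_actE // mulmxA -repM //.
  by rewrite memv_add ?Z_sub // -rep_actE // memv_img ?L_ideal.
have sWY : (W <= Y)%VS.
  rewrite subv_add sZY; apply/subvP => u /memv_imgP [l' _ ->].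
  by rewrite rep_actE // Y_sub.
have [W_Z | W_Y] := Y_simple W W_sub (addvSl _ _) sWY.
  by rewrite -W_Z -(rep_actE rho_rep) (subvP (addvSr _ _)) ?memv_img.
have /memv_addP [z zZ [w /memv_imgP [l' l'L ->]]] : v \in W by rewrite W_Y.
rewrite rep_actE // => v_eq.
have [y yl'] : exists y, y * (1 - l') = 1.
  apply: (notin_max_left_unit L_unique).
  by apply: contra (one_notin_max L_max) => l'L1; rewrite -(subrK l' 1) memvD.
have z_eq : rho (1 - l') *m v = z by rewrite repB // rep1 // mulmxBl mul1mx {1}v_eq addrK.
case/negP: vNZ.
by rewrite -[v]mul1mx -(rep1 rho_rep) -yl' repM // -mulmxA z_eq Z_sub.
Qed.

End LocalRepresentation.

Lemma local_residue_scalar (k : closedFieldType) (A : falgType k)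
    (L : {vspace A}) n (rho : A -> 'M[k]_n) :
  maximal_left_ideal L -> (forall L', maximal_left_ideal L' -> L' = L) ->
  is_rep rho -> (0 < n)%N -> forall a, exists lam, a - lam%:A \in L.
Proof.
move=> L_max L_unique rho_rep n_gt0 a.
have [lam rho_a_sing] := ex_eigenvalue (rho a) n_gt0; exists lam.
apply: contraR rho_a_sing => /(notin_max_left_unit L_unique) [y ya1].
have := congr1 rho ya1; rewrite repM // rep1 // repB // rep_scalar //.
by case/mulmx1_unit.
Qed.

Lemma vspace_chain_stable (K : fieldType) (vT : vectType K) (U : nat -> {vspace vT}) :
  (forall j, (U j <= U j.+1)%VS) -> exists N, forall j, (N <= j)%N -> U j = U N.
Proof.
move=> U_step; have U_mono := homo_leq
  (r := fun V W : {vspace vT} => is_true (V <= W)%VS) (@subvv _ _) (@subv_trans _ _) U_step.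
have [N _ maxN] := @ex_min_measure _ (fun=> True) (fun j => \dim {:vT} - \dim (U j))%N 0 I.
exists N => j le_Nj; apply/eqP; rewrite eq_sym eqEdim U_mono //=.
have := maxN j I; have := dimvS (subvf (U j)); lia.
Qed.

Lemma unitmx_subr1_nilpotent (K : fieldType) n (y : 'M[K]_n.+1) j :
  y ^+ j = 0 -> 1 - y \in unitmx.
Proof.
move=> yj0; have : (1 - y) *m \sum_(i < j) y ^+ i = 1%:M.
  by rewrite mulmxE -opprB mulNr -subrX1 yj0 sub0r opprK.
by case/mulmx1_unit.
Qed.

Section FittingLemma.

Variables (K : fieldType) (A : falgType K) (n : nat) (rho : A -> 'M[K]_n.+1).
Hypothesis rho_indec : indecomposable rho.

Lemma Fitting_End_mod y : End_mod rho y -> y \in unitmx \/ exists j, y ^+ j = 0.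
Proof.
case: rho_indec => _ indec Ey.
have Ey_pow j : End_mod rho (y ^+ j).
  by elim: j => [|j IHj]; [exact: End_mod_scalar | rewrite exprS; apply: End_modM].
pose ker j := lker (linfun (mulmx (y ^+ j)) : 'End('cV[K]_n.+1)).
have kerE j v : (v \in ker j) = (y ^+ j *m v == 0) by rewrite memv_ker lfunE.
have ker_step j : (ker j <= ker j.+1)%VS.
  by apply/subvP => v; rewrite !kerE exprS -mulmxE -mulmxA => /eqP ->; rewrite mulmx0.
have [N ker_stable] := vspace_chain_stable ker_step.
pose g : 'End('cV[K]_n.+1) := linfun (mulmx (y ^+ N)).
have ker_img0 : (ker N :&: limg g = 0)%VS.
  apply/eqP; rewrite -subv0; apply/subvP => v /memv_capP [] /[swap] /memv_imgP [u _ ->].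
  rewrite memv0 !lfunE kerE /= mulmxA mulmxE -exprD -kerE ker_stable ?leq_addr //.
  by rewrite kerE.
have ker_img_full : (ker N + limg g = fullv)%VS.
  apply/eqP; rewrite eqEdim subvf /=.
  have := dimv_sum_cap (ker N) (limg g); rewrite ker_img0 dimv0 addn0 => ->.
  by have := limg_ker_dim g fullv; rewrite capfv => ->.
have ker_sub : submodule rho (ker N).
  by move=> a v; rewrite !kerE mulmxA Ey_pow -mulmxA => /eqP ->; rewrite mulmx0.
have img_sub : submodule rho (limg g).
  move=> a v /memv_imgP [u _ ->]; rewrite lfunE /= mulmxA -Ey_pow -mulmxA.
  by rewrite -[_ *m _](lfunE (mulmx (y ^+ N))) memv_img ?memvf.
case: (indec _ _ ker_sub img_sub ker_img0 ker_img_full) => [ker0 | img0].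
  left; apply/unitmx_cVP => v yv0.
  have : v \in ker N.+1 by rewrite kerE exprSr -mulmxE -mulmxA yv0 mulmx0.
  by rewrite ker_stable // ker0 memv0 => /eqP.
right; exists N; apply: matrix_cVP => v; rewrite mul0mx.
by have := memv_img g (memvf v); rewrite img0 memv0 lfunE => /eqP.
Qed.

End FittingLemma.

Section LocalEndomorphismAlgebra.

Variables (K : fieldType) (A : falgType K) (n : nat) (rho : A -> 'M[K]_n).
Hypothesis rho_indec : indecomposable rho.

Lemma End_mod_nonunit_subr1 y :
  End_mod rho y -> y \notin unitmx -> 1%:M - y \in unitmx.
Proof.
move: rho rho_indec y; case: n => [|m] rho' indec y Ey yNU; first by case: indec.
have [yU | [j yj0]] := Fitting_End_mod indec Ey; first by rewrite yU in yNU.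
exact: unitmx_subr1_nilpotent yj0.
Qed.

Lemma End_mod_nonunitD y z : End_mod rho y -> End_mod rho z ->
  y \notin unitmx -> z \notin unitmx -> y + z \notin unitmx.
Proof.
move=> Ey Ez yNU zNU; apply/negP => yzU.
have Eyz : End_mod rho (y + z) by rewrite -[y]scale1r; apply: End_mod_lin.
have Eiy : End_mod rho (invmx (y + z) *m y) by apply: End_modM => //; apply: End_modV.
have := End_mod_nonunit_subr1 Eiy; rewrite unitmx_mul (negbTE yNU) andbF => /(_ isT).
have -> : 1%:M - invmx (y + z) *m y = invmx (y + z) *m z.
  by rewrite -(mulVmx yzU) mulmxDr addrC addKr.
by rewrite unitmx_mul (negbTE zNU) andbF.
Qed.

End LocalEndomorphismAlgebra.

Section CommonEigenvector.

Variables (k : closedFieldType) (A : falgType k) (n : nat) (rho : A -> 'M[k]_n).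
Hypothesis rho_indec : indecomposable rho.

Definition End_stable (X : {vspace 'cV[k]_n}) :=
  forall y v, End_mod rho y -> v \in X -> y *m v \in X.

Lemma End_mod_nonunit_kill (X : {vspace 'cV[k]_n}) c0 :
    (forall Y, Y != 0%VS /\ End_stable Y -> (Y <= X)%VS -> Y = X) ->
    End_stable X -> c0 \in X -> c0 != 0 ->
  forall y, End_mod rho y -> y \notin unitmx -> y *m c0 = 0.
Proof.
move=> X_min X_stable c0X c0_neq0.
(* The nonunits of the local algebra End(M) send c0 onto an End-stable subspace
   N of X; N = X would give c0 = z c0 with 1 - z invertible. *)
have [N memN] : exists N : {vspace 'cV[k]_n}, forall u, u \in N <->
    exists2 z, End_mod rho z /\ z \notin unitmx & u = z *m c0.
  apply: ex_vspace_of.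
    exists 0; last by rewrite mul0mx.
    split; first by move=> a; rewrite mul0mx mulmx0.
    by apply: contra c0_neq0 => /unitmx_cVP inj0; rewrite (inj0 c0) ?mul0mx.
  move=> c _ _ [z1 [Ez1 z1NU] ->] [z2 [Ez2 z2NU] ->].
  exists (c *: z1 + z2); last by rewrite mulmxDl scalemxAl.
  split; first exact: End_mod_lin.
  apply: (End_mod_nonunitD rho_indec) => //; first exact: End_modZ.
  by rewrite -mul_scalar_mx unitmx_mul (negbTE z1NU) andbF.
have N_stable : End_stable N.
  move=> z u Ez /memN [z' [Ez' z'NU] ->]; apply/memN.
  exists (z *m z'); last by rewrite mulmxA.
  by split; [apply: End_modM | rewrite unitmx_mul (negbTE z'NU) andbF].
have sNX : (N <= X)%VS by apply/subvP => u /memN [z [Ez _] ->]; apply: X_stable.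
suff N0 : N = 0%VS by move=> y Ey yNU; apply/eqP; rewrite -memv0 -N0; apply/memN; exists y.
apply/eqP; move: c0_neq0; apply: contraR => N_neq0.
have /memN [z [Ez zNU] c0_eq] : c0 \in N by rewrite (X_min N).
have /unitmx_cVP subr1_inj := End_mod_nonunit_subr1 rho_indec Ez zNU.
by apply/eqP; apply: subr1_inj; rewrite mulmxBl mul1mx -c0_eq subrr.
Qed.

Lemma ex_End_mod_eigenvector (Q : {vspace 'cV[k]_n}) :
  Q != 0%VS -> End_stable Q ->
  exists2 c0, c0 \in Q /\ c0 != 0 &
    forall y, End_mod rho y -> exists lam, y *m c0 = lam *: c0.
Proof.
move=> Q_neq0 Q_stable.
have [X [[X_neq0 X_stable] sXQ X_min]] := @ex_minimal_vspace _ _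
  (fun X => X != 0%VS /\ End_stable X) _ (conj Q_neq0 Q_stable).
have c0X := memv_pick X; have c0_neq0 : vpick X != 0 by rewrite vpick0.
exists (vpick X); first by split; [apply: (subvP sXQ) | ].
move=> y Ey; have [lam ylam_sing] := ex_eigenvalue y (proj1 rho_indec).
exists lam; apply/eqP; rewrite -subr_eq0 -mul_scalar_mx -mulmxBl; apply/eqP.
apply: (End_mod_nonunit_kill X_min X_stable c0X c0_neq0 _ ylam_sing).
by apply: End_modB => //; apply: End_mod_scalar.
Qed.

End CommonEigenvector.

Section CyclicGenerator.

Variables (k : closedFieldType) (A : falgType k) (L : {vspace A}).
Variables (n : nat) (rho : A -> 'M[k]_n).
Hypotheses (L_max : maximal_left_ideal L)
  (L_unique : forall L', maximal_left_ideal L' -> L' = L)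
  (rho_rep : is_rep rho) (rho_indec : indecomposable rho).

Definition proper_submodule (Z : {vspace 'cV[k]_n}) := submodule rho Z /\ Z != fullv.

Lemma max_submodule_rad Z : proper_submodule Z ->
    (forall Y, proper_submodule Y -> (Z <= Y)%VS -> Y = Z) ->
  forall l v, l \in L -> rho l *m v \in Z.
Proof.
move=> [Z_sub _] Z_max l v lL.
apply: (max_ideal_kills_simple_factor L_max L_unique rho_rep Z_sub (submodule_full rho))
  => //; rewrite ?subvf ?memvf // => W W_sub sZW _.
by have [-> | W_proper] := eqVneq W fullv; [right | left; apply: Z_max].
Qed.

Lemma ex_socle_eigenvector :
  exists2 c0 : 'cV[k]_n, c0 != 0 /\ (forall l, l \in L -> rho l *m c0 = 0) &
    forall y, End_mod rho y -> exists lam, y *m c0 = lam *: c0.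
Proof.
have full_neq0 := fullv_cV_neq0 k (proj1 rho_indec).
have [S [[S_sub S_neq0] _ S_min]] := @ex_minimal_vspace _ _
  (fun S => submodule rho S /\ S != 0%VS) _ (conj (submodule_full rho) full_neq0).
have [Q memQ] : exists Q : {vspace 'cV[k]_n},
    forall c, c \in Q <-> forall l, l \in L -> rho l *m c = 0.
  apply: ex_vspace_of => [l _ | c x y x0 y0 l lL]; first by rewrite mulmx0.
  by rewrite mulmxDr -scalemxAr x0 ?y0 // scaler0 addr0.
have Q_stable : End_stable rho Q.
  by move=> y c Ey /memQ c0; apply/memQ => l lL; rewrite mulmxA -Ey -mulmxA c0 ?mulmx0.
have Q_neq0 : Q != 0%VS.
  apply: contraNneq S_neq0 => Q0; rewrite -subv0 -Q0.
  apply/subvP => v vS; apply/memQ => l lL; apply/eqP; rewrite -memv0.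
  apply: (max_ideal_kills_simple_factor L_max L_unique rho_rep (submodule0 rho) S_sub)
    => // [|W W_sub _ sWS]; first exact: sub0v.
  by have [-> | W_neq0] := eqVneq W 0%VS; [left | right; apply: S_min].
have [c0 [/memQ Lc0 c0_neq0] c0_eigen] := ex_End_mod_eigenvector rho_indec Q_neq0 Q_stable.
by exists c0.
Qed.

Variable f : 'M[k]_n -> 'M[k]_n -> k.
Hypotheses (f_linl : forall c x1 x2 y, f (c *: x1 + x2) y = c * f x1 y + f x2 y)
  (f_zero : forall y, End_mod rho y -> f 0 y = 0)
  (f_bimod : forall a b x y, End_mod rho a -> End_mod rho b -> End_mod rho x ->
     End_mod rho y -> f (a *m x *m b) y = f x (b *m y *m a))
  (f_inj : forall x, End_mod rho x -> (forall y, End_mod rho y -> f x y = 0) -> x = 0).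

Lemma sym_form_eigen_zero (h : 'M[k]_n) : End_mod rho h ->
    (forall Y, End_mod rho Y -> exists lam, Y *m h = lam *: h) ->
  f h 1%:M = 0 -> h = 0.
Proof.
move=> Eh h_eigen fh1; apply: f_inj => // Y EY.
have E1 := End_mod_scalar rho 1.
have [lam Yh] := h_eigen Y EY.
have -> : f h Y = f (Y *m h *m 1%:M) 1%:M by rewrite f_bimod // !mul1mx.
by rewrite mulmx1 Yh -[lam *: h]addr0 f_linl fh1 f_zero // mulr0 addr0.
Qed.

Variable c0 : 'cV[k]_n.
Hypotheses (c0_neq0 : c0 != 0) (L_c0 : forall l, l \in L -> rho l *m c0 = 0)
  (c0_eigen : forall y, End_mod rho y -> exists lam, y *m c0 = lam *: c0).

Definition through_c0 (h : 'M[k]_n) := forall v, h *m v \in <[c0]>%VS.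

Lemma through_c0_End_mod h : through_c0 h ->
  (forall l, l \in L -> h *m rho l = 0) -> End_mod rho h.
Proof.
move=> h_c0 hL a.
have [lam a_lam] := local_residue_scalar L_max L_unique rho_rep (proj1 rho_indec) a.
have -> : rho a = lam%:M + rho (a - lam%:A) by rewrite repB // rep_scalar // addrC subrK.
rewrite mulmxDr mulmxDl hL // addr0 mul_mx_scalar mul_scalar_mx.
suff -> : rho (a - lam%:A) *m h = 0 by rewrite addr0.
apply: matrix_cVP => v; rewrite -mulmxA mul0mx; have /vlineP [mu ->] := h_c0 v.
by rewrite -scalemxAr L_c0 // scaler0.
Qed.

Lemma through_c0_eigen h : through_c0 h ->
  forall Y, End_mod rho Y -> exists lam, Y *m h = lam *: h.
Proof.
move=> h_c0 Y EY; have [lam Yc0] := c0_eigen EY; exists lam.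
apply: matrix_cVP => v; rewrite -mulmxA -scalemxAl; have /vlineP [mu ->] := h_c0 v.
by rewrite -scalemxAr Yc0 !scalerA mulrC.
Qed.

Lemma through_c0_form_unique h h' (m : 'cV[k]_n) :
    End_mod rho h -> End_mod rho h' -> through_c0 h -> through_c0 h' ->
  h' *m m = 0 -> h *m m != 0 -> h' = 0.
Proof.
move=> Eh Eh' h_c0 h'_c0 h'm hm.
pose H := f h' 1%:M *: h - f h 1%:M *: h'.
have H_c0 : through_c0 H by move=> v; rewrite mulmxBl -!scalemxAl memvB ?memvZ.
have EH : End_mod rho H by apply: End_modB; apply: End_modZ.
have H0 : H = 0.
  apply: (sym_form_eigen_zero EH (through_c0_eigen H_c0)).
  rewrite /H -scaleNr f_linl -[(- _) *: h']addr0 f_linl f_zero; last exact: End_mod_scalar.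
  by rewrite addr0 mulNr mulrC subrr.
have : H *m m = f h' 1%:M *: (h *m m) by rewrite mulmxBl -!scalemxAl h'm scaler0 subr0.
rewrite H0 mul0mx => /esym /eqP; rewrite scaler_eq0 (negbTE hm) orbF => /eqP fh'1.
exact: (sym_form_eigen_zero Eh' (through_c0_eigen h'_c0) fh'1).
Qed.

Lemma ex_through_c0_notin (Z : {vspace 'cV[k]_n}) m :
    (forall l v, l \in L -> rho l *m v \in Z) -> m \notin Z ->
  exists h, [/\ End_mod rho h, through_c0 h, forall z, z \in Z -> h *m z = 0
    & h *m m = c0].
Proof.
move=> LZ mNZ; have [phi [phi_lin phiZ phim]] := ex_linear_form_notin mNZ.
pose h := lin1_cmx (fun v => phi v *: c0).
have hE v : h *m v = phi v *: c0.
  by apply: mul_lin1_cmx => c x y; rewrite phi_lin scalerDl scalerA.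
have h_c0 : through_c0 h by move=> v; rewrite hE memvZ ?memv_line.
exists h; split=> //; last by rewrite hE phim scale1r.
  apply: through_c0_End_mod => // l lL; apply: matrix_cVP => v.
  by rewrite -mulmxA hE phiZ ?LZ // scale0r mul0mx.
by move=> z zZ; rewrite hE phiZ // scale0r.
Qed.

Lemma ex_cyclic_generator : exists m : 'cV[k]_n, forall v, exists x, rho x *m m = v.
Proof.
have proper0 : proper_submodule 0%VS.
  by split; [exact: submodule0 | rewrite eq_sym fullv_cV_neq0 //; case: rho_indec].
have [Z [Z_proper _ Z_max]] := ex_maximal_vspace proper0.
have /subvPn [m _ mNZ] : ~~ (fullv <= Z)%VS.
  by case: Z_proper => _; apply: contra => sfZ; rewrite eqEsubv sfZ subvf.
exists m; apply: NNPP => m_not_gen.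
pose C := limg (rep_act rho m).
have memC x : rho x *m m \in C by rewrite -rep_actE // memv_img ?memvf.
have C_proper : proper_submodule C.
  split=> [a u /memv_imgP [x _ ->] | ]; first by rewrite rep_actE // mulmxA -repM.
  apply/eqP => C_full; apply: m_not_gen => v.
  have /memv_imgP [x _ ->] : v \in C by rewrite C_full memvf.
  by exists x; rewrite rep_actE.
have [Z' [Z'_proper sCZ' Z'_max]] := ex_maximal_vspace C_proper.
have mZ' : m \in Z' by rewrite (subvP sCZ') // -[m]mul1mx -(rep1 rho_rep) memC.
have /subvPn [m' m'Z m'NZ'] : ~~ (Z <= Z')%VS.
  by apply: contra mNZ => /(Z_max _ Z'_proper) <-.
have [h [Eh h_c0 _ hm]] := ex_through_c0_notin (max_submodule_rad Z_proper Z_max) mNZ.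
have [h' [Eh' h'_c0 h'Z' h'm']] :=
  ex_through_c0_notin (max_submodule_rad Z'_proper Z'_max) m'NZ'.
have h'0 : h' = 0.
  by apply: (through_c0_form_unique Eh Eh' h_c0 h'_c0 (h'Z' _ mZ')); rewrite hm.
by move: c0_neq0; rewrite -h'm' h'0 mul0mx eqxx.
Qed.

End CyclicGenerator.

Lemma cyclic_of_symmetric_End (k : closedFieldType) (A : falgType k)
    n (rho : A -> 'M[k]_n) :
  local_algebra A -> is_rep rho -> indecomposable rho ->
  symmetric_quot (@mulmx k n n n) (End_mod rho) (fun f => f = 0) ->
  exists m : 'cV[k]_n, forall v, exists x, rho x *m m = v.
Proof.
move=> [L [L_max L_unique]] rho_rep rho_indec.
move=> [f [f_linl [_ [f_zero [_ [f_bimod [f_inj _]]]]]]].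
have [c0 [c0_neq0 L_c0] c0_eigen] :=
  ex_socle_eigenvector L_max L_unique rho_rep rho_indec.
exact: (ex_cyclic_generator L_max L_unique rho_rep rho_indec f_linl
  (fun y => f_zero 0 y erefl) f_bimod f_inj c0_neq0 L_c0 c0_eigen).
Qed.

Section SymmetricTransfer.

Variables (K : fieldType) (V W : lmodType K).
Variables (mulV : V -> V -> V) (mulW : W -> W -> W).
Variables (G I : V -> Prop) (G' I' : W -> Prop).
(* [sigma] is a linear section of [Psi] modulo [I]; it pulls linear forms on
   [G / I] back to [G' / I']. *)
Variables (Psi : V -> W) (sigma : W -> V).
Hypotheses (Psi_lin : forall c x y, Psi (c *: x + y) = c *: Psi x + Psi y)
  (Psi_G : forall x, G x -> G' (Psi x))
  (Psi_onto : forall y, G' y -> exists2 x, G x & Psi x = y)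
  (Psi_anti : forall a x, G a -> G x -> Psi (mulV a x) = mulW (Psi x) (Psi a))
  (G_mul : forall a b, G a -> G b -> G (mulV a b))
  (mulWA : forall x y z, mulW x (mulW y z) = mulW (mulW x y) z)
  (Psi_I : forall x, I x -> I' (Psi x))
  (Psi_I'_I : forall x, G x -> I' (Psi x) -> I x)
  (sigma_lin : forall c x y, sigma (c *: x + y) = c *: sigma x + sigma y)
  (sigma_I : forall y, I' y -> I (sigma y))
  (sigma_Psi : forall x, G x -> I (sigma (Psi x) - x)).

Lemma symmetric_quot_anti : symmetric_quot mulW G' I' -> symmetric_quot mulV G I.
Proof.
move=> [f [f_linl [f_linr [f_Il [f_Ir [f_bimod [f_inj f_onto]]]]]]].
exists (fun x y => f (Psi x) (Psi y)); split.
  by move=> c x1 x2 y; rewrite Psi_lin f_linl.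
split; first by move=> c x y1 y2; rewrite Psi_lin f_linr.
split; first by move=> x y Ix Gy; apply: f_Il; [apply: Psi_I | apply: Psi_G].
split; first by move=> x y Gx Iy; apply: f_Ir; [apply: Psi_G | apply: Psi_I].
split.
  move=> a b x y Ga Gb Gx Gy; have Gax := G_mul Ga Gx; have Gby := G_mul Gb Gy.
  by rewrite !Psi_anti // !mulWA f_bimod //; apply: Psi_G.
split.
  move=> x Gx fx0; apply: Psi_I'_I => //; apply: f_inj; first exact: Psi_G.
  by move=> _ /Psi_onto [y Gy <-]; apply: fx0.
move=> g g_lin gI.
have gD u v : g (u + v) = g u + g v by have := g_lin 1 u v; rewrite scale1r mul1r.
have [y' G'y' fy'] := f_onto (fun y => g (sigma y))
  (fun c y1 y2 => etrans (congr1 g (sigma_lin c y1 y2)) (g_lin _ _ _))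
  (fun y I'y => gI _ (sigma_I I'y)).
have [x Gx Psi_x] := Psi_onto G'y'.
exists x => // y Gy; rewrite Psi_x fy'; last exact: Psi_G.
by rewrite -[sigma (Psi y)](subrK y) gD (gI _ (sigma_Psi Gy)) add0r.
Qed.

End SymmetricTransfer.

Lemma Gamma_ofP (K : fieldType) (A : falgType K) (I : {vspace A}) x :
  Gamma_of I x <-> forall i, i \in I -> i * x \in I.
Proof.
split=> [/prodvP IxI i iI | IxI]; first exact: IxI iI (memv_line x).
by apply/prodvP => i _ iI /vlineP [c ->]; rewrite -scalerAr memvZ ?IxI.
Qed.

Lemma Gamma_ofM (K : fieldType) (A : falgType K) (I : {vspace A}) a b :
  Gamma_of I a -> Gamma_of I b -> Gamma_of I (a * b).
Proof.
move=> /Gamma_ofP IaI /Gamma_ofP IbI; apply/Gamma_ofP => i iI.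
by rewrite mulrA IbI ?IaI.
Qed.

Section CyclicModule.

Variables (K : fieldType) (A : falgType K) (n : nat) (rho : A -> 'M[K]_n).
Variable m : 'cV[K]_n.
Hypotheses (rho_rep : is_rep rho) (m_gen : forall v, exists x, rho x *m m = v).

Definition ann := lker (rep_act rho m).

Lemma memv_ann x : (x \in ann) = (rho x *m m == 0).
Proof. by rewrite memv_ker rep_actE. Qed.

Lemma subr_ann u b : rho u *m m = rho b *m m -> u - b \in ann.
Proof. by move=> ub; rewrite memv_ann repB // mulmxBl ub subrr. Qed.

Lemma ann_left_ideal : left_ideal ann.
Proof.
apply/left_idealP => a u; rewrite !memv_ann repM // -mulmxA => /eqP ->.
by rewrite mulmx0.
Qed.

Lemma iso_quot_ann : iso_quot rho ann.
Proof.
exists (fun x => rho x *m m); split=> // [c x y | a x | x].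
- by rewrite -!rep_actE // linearP.
- by rewrite repM // mulmxA.
- by rewrite memv_ann; split=> /eqP.
Qed.

Definition ann_sec (v : 'cV[K]_n) := ((rep_act rho m)^-1)%VF v.

Lemma rep_ann_secK v : rho (ann_sec v) *m m = v.
Proof.
rewrite -rep_actE // /ann_sec limg_lfunVK //.
by have [x <-] := m_gen v; rewrite -rep_actE // memv_img ?memvf.
Qed.

(* Right multiplication [b m |-> b x m] by [x] on [M = Lambda m], computed
   through the section [ann_sec]; it does not depend on the section when [x]
   lies in [Gamma_of ann]. *)
Definition rmul_mx x := lin1_cmx (fun v => rho (ann_sec v * x) *m m).

Lemma rmul_mxE x v : rmul_mx x *m v = rho (ann_sec v * x) *m m.
Proof.
apply: mul_lin1_cmx => c u w.
by rewrite /ann_sec linearP mulrDl -scalerAl -!rep_actE // linearP.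
Qed.

Lemma rmul_mx_rep x b : Gamma_of ann x -> rmul_mx x *m (rho b *m m) = rho (b * x) *m m.
Proof.
move=> /Gamma_ofP annx; rewrite rmul_mxE; apply/eqP; rewrite -subr_eq0 -mulmxBl -repB //.
by rewrite -mulrBl -memv_ann annx ?subr_ann ?rep_ann_secK.
Qed.

Lemma End_mod_eq_gen Y1 Y2 :
  End_mod rho Y1 -> End_mod rho Y2 -> Y1 *m m = Y2 *m m -> Y1 = Y2.
Proof.
move=> EY1 EY2 Y12; apply: matrix_cVP => v; have [x <-] := m_gen v.
by rewrite !mulmxA EY1 EY2 -!mulmxA Y12.
Qed.

Lemma rmul_mx_m x : Gamma_of ann x -> rmul_mx x *m m = rho x *m m.
Proof. by move=> annx; rewrite -{1}[m]mul1mx -(rep1 rho_rep) rmul_mx_rep // mul1r. Qed.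

Lemma rmul_mx_End x : Gamma_of ann x -> End_mod rho (rmul_mx x).
Proof.
move=> annx a; apply: matrix_cVP => v; have [b <-] := m_gen v.
by rewrite -!mulmxA (mulmxA (rho a)) -repM // !rmul_mx_rep // mulmxA -repM // mulrA.
Qed.

Lemma rmul_mx_onto Y : End_mod rho Y -> exists2 x, Gamma_of ann x & rmul_mx x = Y.
Proof.
move=> EY; have [x Yx] := m_gen (Y *m m).
have annx : Gamma_of ann x.
  apply/Gamma_ofP => i; rewrite !memv_ann repM // -mulmxA Yx mulmxA -EY -mulmxA.
  by move=> /eqP ->; rewrite mulmx0.
by exists x => //; apply: End_mod_eq_gen => //; [apply: rmul_mx_End | rewrite rmul_mx_m].
Qed.

Lemma rmul_mxM a x : Gamma_of ann a -> Gamma_of ann x ->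
  rmul_mx (a * x) = rmul_mx x *m rmul_mx a.
Proof.
move=> anna annx; have annax := Gamma_ofM anna annx.
apply: End_mod_eq_gen; first exact: rmul_mx_End.
  by apply: End_modM; apply: rmul_mx_End.
by rewrite -mulmxA !rmul_mx_m // rmul_mx_rep.
Qed.

Lemma rmul_mx_ann x : x \in ann -> rmul_mx x = 0.
Proof.
move=> annx; apply: matrix_cVP => v; rewrite rmul_mxE mul0mx.
by apply/eqP; rewrite -memv_ann; move/left_idealP: ann_left_ideal; apply.
Qed.

Lemma symmetric_quot_Gamma_of :
  symmetric_quot (@mulmx K n n n) (End_mod rho) (fun f => f = 0) ->
  symmetric_quot (@GRing.mul A) (Gamma_of ann) (fun x => x \in ann).
Proof.
apply: (@symmetric_quot_anti _ _ _ _ _ _ _ _ _ rmul_mx (fun Y => ann_sec (Y *m m))).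
- move=> c x y; apply: matrix_cVP => v.
  by rewrite mulmxDl -scalemxAl !rmul_mxE mulrDr -scalerAr -!rep_actE // linearP.
- exact: rmul_mx_End.
- exact: rmul_mx_onto.
- exact: rmul_mxM.
- exact: Gamma_ofM.
- exact: mulmxA.
- exact: rmul_mx_ann.
- by move=> x annx Psi0; rewrite memv_ann -rmul_mx_m // Psi0 mul0mx.
- by move=> c Y Z; rewrite mulmxDl -scalemxAl /ann_sec linearP.
- by move=> _ ->; rewrite mul0mx /ann_sec linear0 mem0v.
- by move=> x annx; apply: subr_ann; rewrite rep_ann_secK rmul_mx_m.
Qed.

End CyclicModule.

Theorem corollary5p3 (k : closedFieldType) (Lambda : falgType k)
    (n : nat) (rho : Lambda -> 'M[k]_n) :
  local_algebra Lambda ->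
  is_rep rho ->
  indecomposable rho ->
  symmetric_quot (@mulmx k n n n) (End_mod rho) (fun f => f = 0) ->
  exists I : {vspace Lambda},
    [/\ left_ideal I, iso_quot rho I &
        symmetric_quot (@GRing.mul Lambda) (Gamma_of I) (fun x => x \in I)].
Proof.
move=> Lambda_local rho_rep rho_indec End_sym.
have [m m_gen] := cyclic_of_symmetric_End Lambda_local rho_rep rho_indec End_sym.
exists (ann rho m); split.
- exact: ann_left_ideal.
- exact: iso_quot_ann.
- exact: symmetric_quot_Gamma_of.
Qed.
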